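(* Let $0<q<1$, $0\le p<1$, and \[ \beta_n=\frac{q(1-q^n)(1-pq^n)}{(1+q-(1+p)q^n)(1+q-(1+p)q^{n+1})},\quad n\ge1. \] Then the continued fraction \[ 1-\cfrac{\beta_1}{1-\cfrac{\beta_2}{1-\cfrac{\beta_3}{1-\dotsb}}} \] converges and has the value \[ \frac{q}{1-pq}\frac{\Delta_0}{\Delta_1}=\frac{q(1-p)(pq^2;q)_\infty}{(pq;q)_\infty-(q;q)_\infty}. \] More generally, for every $k\ge0$, the continued fraction \[ 1-\cfrac{\beta_{k+1}}{1-\cfrac{\beta_{k+2}}{1-\cfrac{\beta_{k+3}}{1-\dotsb}}} \] has the value $\dfrac{q}{1+q-(1+p)q^{k+1}}\dfrac{\Delta_{k}}{\Delta_{k+1}}$.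
   Context: $(a;q)_n=\prod_{k=1}^n(1-aq^{k-1})$ for $n\in\{0,1,\dots\}\cup\{\infty\}$, and $\Delta_n=(pq^n;q)_\infty-(q^n;q)_\infty$ for $n\ge0$. The value of the continued fraction is the limit of its finite approximants. *)

From Stdlib Require Import Reals.
From Coquelicot Require Import Coquelicot.
Open Scope R_scope.

Fixpoint qpoch (a q : R) (n : nat) : R :=
  match n with
  | O => 1
  | S m => qpoch a q m * (1 - a * q ^ m)
  end.

Definition qpoch_inf (a q : R) : R := real (Lim_seq (fun n => qpoch a q n)).

Definition qDelta (p q : R) (n : nat) : R :=
  qpoch_inf (p * q ^ n) q - qpoch_inf (q ^ n) q.

Definition qbeta (p q : R) (n : nat) : R :=
  q * (1 - q ^ n) * (1 - p * q ^ n) /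
  ((1 + q - (1 + p) * q ^ n) * (1 + q - (1 + p) * q ^ (S n))).

(* N-th finite approximant of 1 - b 0/(1 - b 1/(1 - b 2/(1 - ...))):
   cf_approx b 0 = 1,  cf_approx b (N+1) = 1 - b 0 / cf_approx (b shifted) N,
   i.e. 1 - b0/(1 - b1/( ... /(1 - b_{N-1}))). *)
Fixpoint cf_approx (b : nat -> R) (N : nat) : R :=
  match N with
  | O => 1
  | S M => 1 - b O / cf_approx (fun n => b (S n)) M
  end.

(* Write D_k(L) = (p q^k; q)_L - (q^k; q)_L and d_n = 1 + q - (1 + p) q^n.  Peeling
   the first two factors off every product gives the three-term recurrence
     q D_k(L+2) = d_(k+1) D_(k+1)(L+1) - (1 - q^(k+1)) (1 - p q^(k+1)) D_(k+2)(L),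
   which is the recurrence satisfied by the tails of the continued fraction; since
   D_(k+2)(0) = 0, the N-th approximant is q D_k(N+2) / (d_(k+1) D_(k+1)(N+1)), and
   letting N -> oo gives q Delta_k / (d_(k+1) Delta_(k+1)).  The limit is legitimate
   because Delta_(k+1) > 0: the ratio (q^k;q)_L / (p q^k;q)_L decreases in L, and
   (a;q)_oo > 0 for a < 1 because (a;q)_n >= 1 - a/(1-q), applied to a short tail.
   Everything is proved for a general pair 0 <= b < a <= 1 in place of (q^k, p q^k).
   The closed form at k = 0 comes from (1;q)_oo = 0 and
   (p;q)_oo = (1 - p)(1 - p q)(p q^2;q)_oo. *)

From Stdlib Require Import Reals Lra.
From Coquelicot Require Import Coquelicot.
Open Scope R_scope.

Lemma pow_unit_interval (q : R) (n : nat) : 0 <= q <= 1 -> 0 <= q ^ n <= 1.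
Proof.
  intros Hq. split; [apply pow_le; lra|].
  rewrite <- (pow1 n). apply pow_incr. lra.
Qed.

Lemma qpoch_front (a q : R) (n : nat) :
  qpoch a q (S n) = (1 - a) * qpoch (a * q) q n.
Proof.
  induction n as [|n IH]; [simpl; ring|].
  change (qpoch a q (S (S n))) with (qpoch a q (S n) * (1 - a * q ^ S n)).
  rewrite IH. simpl. ring.
Qed.

Section QPochhammer.
Variable q : R.
Hypothesis Hq : 0 <= q <= 1.

Lemma qpoch_nonneg (a : R) (n : nat) : 0 <= a <= 1 -> 0 <= qpoch a q n.
Proof.
  intros Ha. induction n as [|n IH]; simpl; [lra|].
  pose proof (pow_unit_interval q n Hq).
  apply Rmult_le_pos; nra.
Qed.

Lemma qpoch_pos (a : R) (n : nat) : 0 <= a < 1 -> 0 < qpoch a q n.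
Proof.
  intros Ha. induction n as [|n IH]; simpl; [lra|].
  pose proof (pow_unit_interval q n Hq).
  apply Rmult_lt_0_compat; nra.
Qed.

Lemma qpoch_decr (a : R) (n : nat) : 0 <= a <= 1 -> qpoch a q (S n) <= qpoch a q n.
Proof.
  intros Ha. simpl.
  pose proof (pow_unit_interval q n Hq). pose proof (qpoch_nonneg a n Ha).
  assert (0 <= a * q ^ n) by nra.
  nra.
Qed.

Lemma qpoch_lower_bound (a : R) (n : nat) : 0 <= a <= 1 -> q < 1 ->
  1 - a / (1 - q) <= qpoch a q n.
Proof.
  intros Ha Hq1. revert a Ha. induction n as [|n IH]; intros a Ha.
  - simpl. assert (0 <= a / (1 - q)) by (apply Rdiv_le_0_compat; lra). lra.
  - rewrite qpoch_front.
    assert (Hb : 1 - a * q / (1 - q) <= qpoch (a * q) q n) by (apply IH; nra).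
    assert (0 <= a * q / (1 - q)) by (apply Rdiv_le_0_compat; nra).
    replace (a / (1 - q)) with (a + a * q / (1 - q)) by (field; lra).
    assert ((1 - a) * (1 - a * q / (1 - q)) <= (1 - a) * qpoch (a * q) q n)
      by (apply Rmult_le_compat_l; lra).
    nra.
Qed.

Lemma qpoch_ratio_le (a b : R) (n : nat) : 0 <= b <= a -> a <= 1 ->
  (1 - b) * qpoch a q (S n) <= (1 - a) * qpoch b q (S n).
Proof.
  intros Hba Ha. induction n as [|n IH]; [simpl; nra|].
  change (qpoch ?c q (S (S n))) with (qpoch c q (S n) * (1 - c * q ^ S n)).
  pose proof (pow_unit_interval q (S n) Hq).
  pose proof (qpoch_nonneg b (S n) ltac:(lra)).
  assert (b * q ^ S n <= a * q ^ S n) by nra.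
  assert (0 <= 1 - a * q ^ S n) by nra.
  assert (0 <= (1 - a) * qpoch b q (S n)) by nra.
  nra.
Qed.

Lemma qpoch_lt (a b : R) (n : nat) : 0 <= b < a -> a <= 1 ->
  qpoch a q (S n) < qpoch b q (S n).
Proof.
  intros Hba Ha.
  pose proof (qpoch_ratio_le a b n ltac:(lra) Ha).
  pose proof (qpoch_pos b (S n) ltac:(lra)).
  nra.
Qed.

Lemma is_lim_seq_qpoch (a : R) : 0 <= a <= 1 ->
  is_lim_seq (fun n => qpoch a q n) (qpoch_inf a q).
Proof.
  intros Ha.
  assert (Hex : ex_finite_lim_seq (fun n => qpoch a q n)).
  { apply ex_finite_lim_seq_decr with 0.
    - intro n. now apply qpoch_decr.
    - intro n. now apply qpoch_nonneg. }
  destruct Hex as [l Hl].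
  unfold qpoch_inf. now rewrite (is_lim_seq_unique _ _ Hl).
Qed.

Lemma qpoch_inf_front (a : R) : 0 <= a <= 1 ->
  qpoch_inf a q = (1 - a) * qpoch_inf (a * q) q.
Proof.
  intros Ha. unfold qpoch_inf at 1.
  rewrite (is_lim_seq_unique _ ((1 - a) * qpoch_inf (a * q) q)); [reflexivity|].
  apply is_lim_seq_incr_1.
  apply (is_lim_seq_ext (fun n => (1 - a) * qpoch (a * q) q n)).
  - intro n. symmetry. apply qpoch_front.
  - apply (is_lim_seq_scal_l _ _ (qpoch_inf (a * q) q)).
    apply is_lim_seq_qpoch. nra.
Qed.

Lemma qpoch_inf_split (a : R) (n : nat) : 0 <= a <= 1 ->
  qpoch_inf a q = qpoch a q n * qpoch_inf (a * q ^ n) q.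
Proof.
  intros Ha. induction n as [|n IH]; [simpl; rewrite Rmult_1_r; ring|].
  pose proof (pow_unit_interval q n Hq).
  rewrite IH, (qpoch_inf_front (a * q ^ n)) by nra.
  replace (a * q ^ n * q) with (a * q ^ S n) by (simpl; ring).
  simpl. ring.
Qed.

Lemma qpoch_inf_pos (a : R) : 0 <= a < 1 -> q < 1 -> 0 < qpoch_inf a q.
Proof.
  intros Ha Hq1.
  destruct (pow_lt_1_zero q ltac:(rewrite Rabs_pos_eq; lra) ((1 - q) / 2)
              ltac:(apply Rdiv_lt_0_compat; lra)) as [n Hn].
  specialize (Hn n (le_n n)). rewrite Rabs_pos_eq in Hn by (apply pow_le; lra).
  pose proof (pow_unit_interval q n Hq).
  assert (Htail : 1 / 2 <= qpoch_inf (a * q ^ n) q).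
  { assert (Hsmall : a * q ^ n / (1 - q) <= 1 / 2).
    { apply Rmult_le_reg_r with (1 - q); [lra|].
      unfold Rdiv. rewrite Rmult_assoc, Rinv_l by lra. nra. }
    assert (Hle := is_lim_seq_le (fun _ => 1 - a * q ^ n / (1 - q)) _ _ _
                     (fun m => qpoch_lower_bound (a * q ^ n) m ltac:(nra) Hq1)
                     (is_lim_seq_const _) (is_lim_seq_qpoch (a * q ^ n) ltac:(nra))).
    simpl in Hle. lra. }
  rewrite (qpoch_inf_split a n) by lra.
  pose proof (qpoch_pos a n Ha). nra.
Qed.

Lemma qpoch_inf_ratio_le (a b : R) : 0 <= b <= a -> a <= 1 ->
  (1 - b) * qpoch_inf a q <= (1 - a) * qpoch_inf b q.
Proof.
  intros Hba Ha.
  exact (is_lim_seq_le _ _ _ _ (fun n => qpoch_ratio_le a b n Hba Ha)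
    (proj1 (is_lim_seq_incr_1 _ _)
       (is_lim_seq_scal_l _ (1 - b) _ (is_lim_seq_qpoch a ltac:(lra))))
    (proj1 (is_lim_seq_incr_1 _ _)
       (is_lim_seq_scal_l _ (1 - a) _ (is_lim_seq_qpoch b ltac:(lra))))).
Qed.

Lemma qpoch_inf_lt (a b : R) : 0 <= b < a -> a <= 1 -> q < 1 ->
  qpoch_inf a q < qpoch_inf b q.
Proof.
  intros Hba Ha Hq1.
  pose proof (qpoch_inf_ratio_le a b ltac:(lra) Ha).
  pose proof (qpoch_inf_pos b ltac:(lra) Hq1).
  nra.
Qed.

End QPochhammer.

Definition qpoch_diff (a b q : R) (n : nat) : R := qpoch b q n - qpoch a q n.

Definition qpoch_inf_diff (a b q : R) : R := qpoch_inf b q - qpoch_inf a q.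

Definition qden (a b q : R) : R := 1 + q - (a + b) * q.

Definition qcoef (a b q : R) : R :=
  q * (1 - a * q) * (1 - b * q) / (qden a b q * qden (a * q) (b * q) q).

Lemma qpoch_diff_rec (a b q : R) (n : nat) :
  q * qpoch_diff a b q (S (S n)) =
  qden a b q * qpoch_diff (a * q) (b * q) q (S n)
  - (1 - a * q) * (1 - b * q) * qpoch_diff (a * q * q) (b * q * q) q n.
Proof. unfold qpoch_diff, qden. rewrite !qpoch_front. ring. Qed.

Lemma cf_approx_ext (b c : nat -> R) (N : nat) :
  (forall n, b n = c n) -> cf_approx b N = cf_approx c N.
Proof.
  revert b c. induction N as [|N IH]; intros b c Hbc; simpl; [reflexivity|].
  rewrite Hbc, (IH (fun n => b (S n)) (fun n => c (S n))); auto.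
Qed.

Lemma qden_pos (a b q : R) : a <= 1 -> b <= 1 -> 0 <= q < 1 -> 0 < qden a b q.
Proof. intros Ha Hb Hq. unfold qden. nra. Qed.

Lemma qpoch_diff_pos (a b q : R) (n : nat) : 0 <= b < a -> a <= 1 -> 0 <= q <= 1 ->
  0 < qpoch_diff a b q (S n).
Proof.
  intros Hba Ha Hq. unfold qpoch_diff.
  pose proof (qpoch_lt q Hq a b n Hba Ha). lra.
Qed.

Lemma qpoch_inf_diff_pos (a b q : R) : 0 <= b < a -> a <= 1 -> 0 <= q < 1 ->
  0 < qpoch_inf_diff a b q.
Proof.
  intros Hba Ha Hq. unfold qpoch_inf_diff.
  pose proof (qpoch_inf_lt q ltac:(lra) a b Hba Ha ltac:(lra)). lra.
Qed.

Lemma cf_approx_qcoef (a b q : R) (N : nat) : 0 <= b < a -> a <= 1 -> 0 < q < 1 ->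
  cf_approx (fun n => qcoef (a * q ^ n) (b * q ^ n) q) N =
  q * qpoch_diff a b q (S (S N)) / (qden a b q * qpoch_diff (a * q) (b * q) q (S N)).
Proof.
  intros Hba Ha Hq. revert a b Hba Ha. induction N as [|N IH]; intros a b Hba Ha.
  - assert (Hrec := qpoch_diff_rec a b q 0).
    unfold qpoch_diff at 3 in Hrec. simpl qpoch in Hrec.
    pose proof (qden_pos a b q ltac:(lra) ltac:(lra) ltac:(lra)).
    pose proof (qpoch_diff_pos (a * q) (b * q) q 0 ltac:(nra) ltac:(nra) ltac:(lra)).
    simpl cf_approx. rewrite Hrec. field. lra.
  - change (cf_approx ?c (S N)) with (1 - c O / cf_approx (fun n => c (S n)) N).
    rewrite (cf_approx_ext _ (fun n => qcoef (a * q * q ^ n) (b * q * q ^ n) q))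
      by (intro n; simpl; f_equal; ring).
    rewrite IH by nra.
    rewrite (qpoch_diff_rec a b q (S N)), !Rmult_1_r.
    unfold qcoef.
    pose proof (qden_pos a b q ltac:(lra) ltac:(lra) ltac:(lra)).
    pose proof (qden_pos (a * q) (b * q) q ltac:(nra) ltac:(nra) ltac:(lra)).
    pose proof (qpoch_diff_pos (a * q) (b * q) q (S N) ltac:(nra) ltac:(nra) ltac:(lra)).
    assert (0 < q * q) by nra.
    pose proof (qpoch_diff_pos (a * q * q) (b * q * q) q N ltac:(nra) ltac:(nra) ltac:(lra)).
    field. lra.
Qed.

Lemma is_lim_seq_qpoch_diff (a b q : R) : 0 <= b <= 1 -> 0 <= a <= 1 -> 0 <= q <= 1 ->
  is_lim_seq (fun n => qpoch_diff a b q n) (qpoch_inf_diff a b q).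
Proof.
  intros Hb Ha Hq. apply is_lim_seq_minus'; now apply is_lim_seq_qpoch.
Qed.

Lemma is_lim_seq_cf_approx_qcoef (a b q : R) : 0 <= b < a -> a <= 1 -> 0 < q < 1 ->
  is_lim_seq (fun N => cf_approx (fun n => qcoef (a * q ^ n) (b * q ^ n) q) N)
    (q / qden a b q * (qpoch_inf_diff a b q / qpoch_inf_diff (a * q) (b * q) q)).
Proof.
  intros Hba Ha Hq.
  pose proof (qden_pos a b q ltac:(lra) ltac:(lra) ltac:(lra)).
  pose proof (qpoch_inf_diff_pos (a * q) (b * q) q ltac:(nra) ltac:(nra) ltac:(lra)).
  apply (is_lim_seq_ext (fun N =>
    q * qpoch_diff a b q (S (S N)) / (qden a b q * qpoch_diff (a * q) (b * q) q (S N)))).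
  { intro N. symmetry. now apply cf_approx_qcoef. }
  replace (q / qden a b q * (qpoch_inf_diff a b q / qpoch_inf_diff (a * q) (b * q) q))
    with (q * qpoch_inf_diff a b q / (qden a b q * qpoch_inf_diff (a * q) (b * q) q))
    by (field; lra).
  apply is_lim_seq_div'; [apply (is_lim_seq_scal_l _ _ (qpoch_inf_diff a b q))
                        | apply (is_lim_seq_scal_l _ _ (qpoch_inf_diff (a * q) (b * q) q))
                        | nra].
  - apply (is_lim_seq_incr_1 (fun n => qpoch_diff a b q (S n))).
    apply (is_lim_seq_incr_1 (fun n => qpoch_diff a b q n)).
    apply is_lim_seq_qpoch_diff; lra.
  - apply (is_lim_seq_incr_1 (fun n => qpoch_diff (a * q) (b * q) q n)).
    apply is_lim_seq_qpoch_diff; nra.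
Qed.

Lemma qbeta_eq_qcoef (p q : R) (k n : nat) :
  qbeta p q (k + S n) = qcoef (q ^ k * q ^ n) (p * q ^ k * q ^ n) q.
Proof.
  unfold qbeta, qcoef, qden. simpl. rewrite !pow_add. simpl.
  unfold Rdiv. f_equal; [ring | f_equal; ring].
Qed.

Lemma is_lim_seq_cf_approx_qbeta (p q : R) (k : nat) : 0 < q < 1 -> 0 <= p < 1 ->
  is_lim_seq (fun N => cf_approx (fun n => qbeta p q (k + S n)) N)
    (q / (1 + q - (1 + p) * q ^ S k) * (qDelta p q k / qDelta p q (S k))).
Proof.
  intros Hq Hp.
  pose proof (pow_unit_interval q k ltac:(lra)).
  assert (0 < q ^ k) by (apply pow_lt; lra).
  apply (is_lim_seq_ext
    (fun N => cf_approx (fun n => qcoef (q ^ k * q ^ n) (p * q ^ k * q ^ n) q) N)).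
  { intro N. apply cf_approx_ext. intro n. symmetry. apply qbeta_eq_qcoef. }
  replace (1 + q - (1 + p) * q ^ S k) with (qden (q ^ k) (p * q ^ k) q)
    by (unfold qden; simpl; ring).
  replace (qDelta p q (S k)) with (qpoch_inf_diff (q ^ k * q) (p * q ^ k * q) q)
    by (unfold qDelta, qpoch_inf_diff; simpl; do 2 f_equal; ring).
  apply is_lim_seq_cf_approx_qcoef; nra.
Qed.

Lemma qDelta_0 (p q : R) : 0 <= q <= 1 -> 0 <= p <= 1 ->
  qDelta p q 0 = (1 - p) * (1 - p * q) * qpoch_inf (p * q ^ 2) q.
Proof.
  intros Hq Hp. unfold qDelta. rewrite pow_O, Rmult_1_r.
  rewrite (qpoch_inf_front q Hq 1), (qpoch_inf_front q Hq p), (qpoch_inf_front q Hq (p * q))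
    by nra.
  replace (p * q * q) with (p * q ^ 2) by ring. ring.
Qed.

Theorem theorem7 (p q : R) (hq0 : 0 < q) (hq1 : q < 1) (hp0 : 0 <= p) (hp1 : p < 1) :
  is_lim_seq (fun N => cf_approx (fun n => qbeta p q (S n)) N)
    (Finite ((q / (1 - p * q) * (qDelta p q 0 / qDelta p q 1))%R)) /\
  q / (1 - p * q) * (qDelta p q 0 / qDelta p q 1) =
    q * (1 - p) * qpoch_inf (p * q ^ 2) q / (qpoch_inf (p * q) q - qpoch_inf q q) /\
  (forall k : nat,
    is_lim_seq (fun N => cf_approx (fun n => qbeta p q (k + S n)%nat) N)
      (Finite ((q / (1 + q - (1 + p) * q ^ (S k)) * (qDelta p q k / qDelta p q (S k))))%R)).
Proof.
  split; [|split].
  - replace (1 - p * q) with (1 + q - (1 + p) * q ^ 1) by (simpl; ring).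
    apply (is_lim_seq_cf_approx_qbeta p q 0); lra.
  - pose proof (qpoch_inf_diff_pos q (p * q) q ltac:(nra) ltac:(lra) ltac:(lra)) as HD1.
    rewrite qDelta_0 by lra.
    unfold qpoch_inf_diff in HD1. unfold qDelta. rewrite pow_1.
    field. nra.
  - intro k. apply is_lim_seq_cf_approx_qbeta; lra.
Qed.
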